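(* Let $G$ be a finite nilpotent group which is not cyclic, and let $r,s$ be real numbers. Then $T_G(r,s)>0$ if $r>s$, $T_G(r,s)=0$ if $r=s$, and $T_G(r,s)<0$ if $r<s$.
   Context: $o(x)$ is the order of $x$, $\varphi$ is Euler's totient function, and $C_N$ is the cyclic group of order $N$. For a finite group $G$ and reals $r,s$, $R_G(r,s) := \sum_{x\in G} \frac{o(x)^s}{\varphi(o(x))^r}$ and $T_G(r,s) := R_G(r,s) - R_{C_{|G|}}(r,s)$. *)

From Stdlib Require Import Reals.
From mathcomp Require Import all_boot all_fingroup all_algebra all_solvable.
Set Implicit Arguments. Unset Strict Implicit. Unset Printing Implicit Defensive.

(* o(x)^s / phi(o(x))^r, with real exponents (bases are >= 1). *)
Definition term_rs (r s : R) (n : nat) : R :=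
  Rdiv (Rpower (INR n) s) (Rpower (INR (totient n)) r).

Definition R_G (gT : finGroupType) (G : {set gT}) (r s : R) : R :=
  foldr Rplus R0 (map (fun x : gT => term_rs r s #[x]%g) (enum G)).

(* R_{C_N}(r,s), with C_N realised as the cyclic group Zp N (order N for N>0). *)
Definition R_C (N : nat) (r s : R) : R := R_G (Zp N) r s.

Definition T_G (gT : finGroupType) (G : {set gT}) (r s : R) : R :=
  Rminus (R_G G r s) (R_C #|G| r s).

From Stdlib Require Import Reals.
From mathcomp Require Import all_boot all_order all_fingroup all_algebra all_solvable.
From mathcomp Require Import Rstruct ring.
Set Implicit Arguments. Unset Strict Implicit. Unset Printing Implicit Defensive.
Import GRing.Theory Num.Theory Order.TTheory.

Local Open Scope ring_scope.

(* Write f(n) = n^s / phi(n)^r.  Since the order and the totient are multiplicative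
   on coprime arguments, the sum of f(o(x)) is multiplicative over coprime direct
   products; a nilpotent group is the direct product of its Sylow subgroups, so R_G
   and R_{C_|G|} both factor over the primes p dividing |G|.  For a group P of order
   p^k, Abel summation along the sets 'Ldiv_(p^j)(P) of elements of order dividing
   p^j, together with f(p^(j+1)) = p^(s-r) f(p^j) for j > 0, gives
     R_P - R_{C_(p^k)} = (1 - p^(s-r)) * sum_(j<k) (|'Ldiv_(p^j)(P)| - p^j) f(p^j).
   Each weight is nonnegative because P has subgroups of every order p^j, and the
   weight at j = k-1 is positive when P is not cyclic.  A noncyclic nilpotent group
   has a noncyclic Sylow subgroup, so the factors compare in the direction given by
   the sign of r - s, strictly at least once. *)

Lemma INR_gt0 n : (0 < n)%N -> Rlt R0 (INR n).
Proof. by move=> n_gt0; apply: lt_0_INR; apply/ssrnat.ltP. Qed.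

Lemma Rpower_lt1 x y : Rlt 1 x -> Rlt y 0 -> Rpower x y < 1.
Proof.
move=> x_gt1 y_lt0; rewrite -[1](Rpower_O x); last by apply: Rlt_trans x_gt1; apply: Rlt_0_1.
by apply/RltP; apply: Rpower_lt.
Qed.

Lemma Rpower_gt1 x y : Rlt 1 x -> Rlt 0 y -> 1 < Rpower x y.
Proof.
move=> x_gt1 y_gt0; rewrite -[1](Rpower_O x); last by apply: Rlt_trans x_gt1; apply: Rlt_0_1.
by apply/RltP; apply: Rpower_lt.
Qed.

Lemma card_nil_pcore (gT : finGroupType) (G : {group gT}) (p : nat) :
  nilpotent G -> #|'O_p(G)%g| = (p ^ logn p #|G|)%N.
Proof. by move=> nilG; rewrite (card_Hall (nilpotent_pcore_Hall p nilG)) p_part. Qed.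

Lemma Zp_cyclic n : cyclic (Zp n).
Proof.
apply: (cyclicS (G := [set: 'Z_n]%G)) (subsetT _) _.
by apply/cyclicP; exists Zp1; apply: Zp_cycle.
Qed.

Lemma ltr_prod_seq (R : numDomainType) (I : eqType) (ps : seq I) (X Y : I -> R) :
  (forall i, i \in ps -> 0 < Y i <= X i) -> (exists2 i, i \in ps & Y i < X i) ->
  \prod_(i <- ps) Y i < \prod_(i <- ps) X i.
Proof.
elim: ps => [|q ps IHps] YX [i] //; rewrite !big_cons.
have YX_ps j : j \in ps -> 0 < Y j <= X j by move=> j_ps; apply: YX; rewrite inE j_ps orbT.
have le_prod : \prod_(j <- ps) Y j <= \prod_(j <- ps) X j.
  by rewrite big_seq_cond [leRHS]big_seq_cond; apply: ler_prod => j /andP[/YX_ps/andP[/ltW-> ->]].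
have prodY_gt0 : 0 < \prod_(j <- ps) Y j.
  by rewrite big_seq_cond prodr_gt0 // => j /andP[/YX_ps/andP[]].
have /andP[Yq_gt0 le_YXq] := YX q (mem_head _ _).
rewrite inE => /orP[/eqP-> lt_YXq | i_ps lt_YXi].
  apply: (lt_le_trans (y := X q * \prod_(j <- ps) Y j)); first by rewrite ltr_pM2r.
  by rewrite ler_pM2l // (lt_le_trans Yq_gt0).
apply: (lt_le_trans (y := Y q * \prod_(j <- ps) X j)).
  by rewrite ltr_pM2l // IHps //; exists i.
by rewrite ler_pM2r // (lt_le_trans prodY_gt0).
Qed.

Lemma card_Ldiv_pgroup_ge (gT : finGroupType) (P : {group gT}) p k j :
  prime p -> #|P| = (p ^ k)%N -> (j <= k)%N -> (p ^ j <= #|'Ldiv_(p ^ j)(P)%g|)%N.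
Proof.
move=> p_pr oP le_jk.
have pP : (p.-group P)%g by rewrite /pgroup oP pnatX pnat_id.
have [|H [sHP _ oH]] := normal_pgroup pP (normal_refl P) (r := j).
  by rewrite oP pfactorK.
rewrite -oH; apply: subset_leq_card; apply/subsetP => x xH.
by apply/LdivP; split; [exact: (subsetP sHP) | apply/eqP; rewrite -order_dvdn order_dvdG].
Qed.

Lemma card_Ldiv1 (gT : finGroupType) (P : {group gT}) : #|'Ldiv_1(P)%g| = 1%N.
Proof.
rewrite (_ : 'Ldiv_1(P) = 1)%g ?cards1 //.
by apply/setP => x; rewrite !inE expg1; case: eqP => [->|]; rewrite ?group1 ?andbF.
Qed.

Lemma card_Ldiv_cyclic_le (gT : finGroupType) (P : {group gT}) n :
  (0 < n)%N -> cyclic P -> (#|'Ldiv_n(P)%g| <= n)%N.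
Proof.
move=> n_gt0 cycP; have LdivP_group := group_Ldiv n (cyclic_abelian cycP).
rewrite -[#|_|]/#|Group LdivP_group| dvdn_leq //.
rewrite -exponent_cyclic ?(cyclicS _ cycP) ?subsetIl //.
by rewrite -sub_LdivT subsetIr.
Qed.

Lemma Ldiv_noncyclic_pgroup (gT : finGroupType) (P : {group gT}) p k :
  prime p -> #|P| = (p ^ k.+1)%N -> ~~ cyclic P -> 'Ldiv_(p ^ k)(P)%g = P.
Proof.
move=> p_pr oP ncycP; apply/setIidPl/subsetP => x xP; rewrite inE -order_dvdn.
have : (#[x]%g %| p ^ k.+1)%N by rewrite -oP order_dvdG.
case/(dvdn_pfactor _ _ p_pr) => a; rewrite leq_eqVlt => /orP[/eqP-> ox | lt_ak ->].
  case/negP: ncycP; apply/cyclicP; exists x; apply/eqP.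
  by rewrite eq_sym eqEcard cycle_subG xP /= -orderE ox oP.
by rewrite dvdn_Pexp2l ?prime_gt1.
Qed.

Lemma nil_noncyclic_pcore (gT : finGroupType) (G : {group gT}) :
  nilpotent G -> ~~ cyclic G -> exists2 p, p \in primes #|G| & ~~ cyclic 'O_p(G)%g.
Proof.
move=> nilG ncycG; apply/allPn; apply: contra ncycG => /allP cyc_pcore.
apply: (nil_Zgroup_cyclic _ nilG); apply/forall_inP => S /SylowP[p p_pr sylS].
have -> := eq_Hall_pcore (nilpotent_pcore_Hall p nilG) sylS.
have [p_G | p'G] := boolP (p \in primes #|G|); first exact: cyc_pcore.
suff /eqP-> : ('O_p(G) :==: 1)%g by apply: cyclic1.
rewrite trivg_card1 (card_Hall (nilpotent_pcore_Hall p nilG)) p_part.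
by rewrite -logn_gt0 lt0n negbK in p'G; rewrite (eqP p'G).
Qed.

Section OrderSum.

Variables r s : R.
Local Notation f := (term_rs r s).

Lemma term_rs_gt0 n : 0 < f n.
Proof. by rewrite /term_rs RdivE divr_gt0 //; apply/RltP; apply: exp_pos. Qed.

Lemma term_rs1 : f 1 = 1.
Proof. by rewrite /term_rs /Rpower /= ln_1 !Rmult_0_r exp_0 RdivE divr1. Qed.

Lemma term_rsM m n : (0 < m)%N -> (0 < n)%N -> coprime m n -> f (m * n) = f m * f n.
Proof.
move=> m_gt0 n_gt0 co_mn; rewrite /term_rs totient_coprime // !mult_INR.
rewrite -!Rpower_mult_distr; try apply: INR_gt0; rewrite ?totient_gt0 //.
by rewrite !RdivE !RmultE invfM mulrACA.
Qed.

Lemma term_rs_pfactorS p j : prime p -> (0 < j)%N ->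
  f (p ^ j.+1) = f (p ^ j) * Rpower (INR p) (s - r).
Proof.
move=> p_pr j_gt0; have p_gt0 := prime_gt0 p_pr.
have phiS : totient (p ^ j.+1) = (totient (p ^ j) * p)%N.
  by rewrite !totient_pfactor //= -mulnA -expnSr prednK.
have phi_gt0 : (0 < totient (p ^ j))%N by rewrite totient_gt0 expn_gt0 p_gt0.
rewrite /term_rs phiS expnSr !mult_INR.
rewrite -!Rpower_mult_distr; try apply: INR_gt0; rewrite ?expn_gt0 ?p_gt0 //.
by rewrite /Rminus Rpower_plus Rpower_Ropp !RdivE !RmultE !RinvE invfM mulrACA.
Qed.

Definition order_sum (gT : finGroupType) (A : {set gT}) : R := \sum_(x in A) f #[x]%g.

Lemma R_G_order_sum (gT : finGroupType) (A : {set gT}) : R_G A r s = order_sum A.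
Proof.
rewrite /R_G /order_sum -big_enum; elim: (enum A) => [|x e IHe].
  by rewrite big_nil.
by rewrite big_cons /= IHe.
Qed.

Lemma order_sum_gt0 (gT : finGroupType) (G : {group gT}) : 0 < order_sum G.
Proof.
rewrite /order_sum (bigD1 1%g) //= ltr_pwDl ?term_rs_gt0 //.
by apply: sumr_ge0 => x _; apply: ltW; apply: term_rs_gt0.
Qed.

Lemma order_sum1 (gT : finGroupType) : order_sum [1 gT]%g = 1.
Proof. by rewrite /order_sum big_set1 order1 term_rs1. Qed.

Lemma order_sum_dprod (gT : finGroupType) (A B G : {group gT}) :
  (A \x B)%g = G -> coprime #|A| #|B| -> order_sum G = order_sum A * order_sum B.
Proof.
move=> defG coAB; have [_ defAB cAB _] := dprodP defG.
have uniqAB := mem_dprod defG.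
have imG : G = [set u.1 * u.2 | u in setX A B]%g :> {set gT}.
  apply/setP=> x; apply/idP/imsetP => [/uniqAB[y [z [yA zB -> _]]] | [[y z]]].
    by exists (y, z); rewrite ?inE ?yA ?zB.
  by rewrite inE /= => /andP[yA zB] ->; rewrite -defAB imset2_f.
rewrite /order_sum imG big_imset /=; last first.
  move=> [y z] [y' z']; rewrite !inE /= => /andP[yA zB] /andP[y'A z'B] eq_yz.
  have yzG : (y * z)%g \in G by rewrite -defAB imset2_f.
  have [? [? [_ _ _ uniq_yz]]] := uniqAB _ yzG.
  by have [-> ->] := uniq_yz y z yA zB (erefl _); have [-> ->] := uniq_yz y' z' y'A z'B eq_yz.
rewrite big_distrlr /= pair_big /=.
apply: eq_big => [[y z]|[y z]]; rewrite ?inE //= => /andP[yA zB].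
have co_yz : coprime #[y]%g #[z]%g.
  by rewrite (coprime_dvdl (order_dvdG yA)) // (coprime_dvdr (order_dvdG zB)).
have c_yz : commute y z by apply: commute_sym; apply: (centsP cAB).
by rewrite orderM // term_rsM ?order_gt0.
Qed.

Lemma order_sum_pcore_prod (gT : finGroupType) (G : {group gT}) (ps : seq nat) :
  nilpotent G -> uniq ps -> all prime ps ->
  order_sum 'O_[pred q | q \in ps](G)%g = \prod_(p <- ps) order_sum 'O_p(G)%g.
Proof.
move=> nilG; elim: ps => [|p ps IHps] /=.
  move=> _ _; rewrite big_nil -(order_sum1 gT); congr order_sum; apply/eqP.
  rewrite trivg_card1; apply/eqP; apply: pnat_1 (pcore_pgroup _ G) _.
  by apply: sub_in_pnat (pnat_pi (cardG_gt0 _)) => q _ _; rewrite !inE.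
case/andP=> p_ps uniq_ps /andP[p_pr ps_pr].
set K := 'O_[pred q | q \in p :: ps](G)%G.
have nilK : nilpotent K by apply: nilpotentS (pcore_sub _ _) nilG.
have Kp : 'O_p(K)%g = 'O_p(G)%g.
  rewrite -pcoreI; apply: eq_pcore => q; rewrite !inE.
  by case: eqP => // ->; rewrite eqxx.
have Kp' : 'O_p^'(K)%g = 'O_[pred q | q \in ps](G)%g.
  rewrite -pcoreI; apply: eq_pcore => q; rewrite !inE.
  by case: eqP => [->|] //=; rewrite (negbTE p_ps).
rewrite big_cons -(IHps uniq_ps ps_pr) (order_sum_dprod (nilpotent_pcoreC p nilK)).
  by rewrite /= Kp Kp'.
exact: pnat_coprime (pcore_pgroup _ _) (pcore_pgroup _ _).
Qed.

Lemma order_sum_nil_prod (gT : finGroupType) (G : {group gT}) : nilpotent G ->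
  order_sum G = \prod_(p <- primes #|G|) order_sum 'O_p(G)%g.
Proof.
move=> nilG; rewrite -order_sum_pcore_prod ?primes_uniq ?all_prime_primes //.
congr order_sum; apply/esym/pcore_pgroup_id.
by apply: sub_in_pnat (pgroup_pi G) => q _; rewrite !inE.
Qed.

Lemma order_sum_pgroup (gT : finGroupType) (P : {group gT}) p k :
  prime p -> #|P| = (p ^ k)%N ->
  order_sum P = (p ^ k)%:R * f (p ^ k) +
    \sum_(j < k) #|'Ldiv_(p ^ j)(P)%g|%:R * (f (p ^ j) - f (p ^ j.+1)).
Proof.
move=> p_pr oP; rewrite /order_sum.
rewrite (eq_bigr (fun x => f (p ^ k) +
  \sum_(j < k | x \in 'Ldiv_(p ^ j)()%g) (f (p ^ j) - f (p ^ j.+1)))); last first.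
  move=> x xP; have : (#[x]%g %| p ^ k)%N by rewrite -oP order_dvdG.
  case/(dvdn_pfactor _ _ p_pr) => a le_ak ox; rewrite ox.
  have tel : \sum_(a <= j < k) (f (p ^ j) - f (p ^ j.+1)) = f (p ^ a) - f (p ^ k).
    by rewrite (telescope_sumr_eq (fun j => - f (p ^ j))) // => [|j _]; rewrite opprK addrC.
  rewrite -[f (p ^ a)](subrK (f (p ^ k))) -tel big_geq_mkord addrC; congr (_ + _).
  by apply: eq_bigl => j; rewrite inE -order_dvdn ox dvdn_Pexp2l ?prime_gt1.
rewrite big_split sumr_const oP mulr_natl; congr (_ + _).
rewrite (exchange_big_dep predT) //=; apply: eq_bigr => j _.
rewrite (eq_bigl [in 'Ldiv_(p ^ j)(P)%g]) ?sumr_const ?mulr_natl // => x.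
by rewrite in_setI.
Qed.

Definition Ldiv_excess (gT : finGroupType) (P : {set gT}) p k : R :=
  \sum_(j < k) (#|'Ldiv_(p ^ j)(P)%g|%:R - (p ^ j)%:R) * f (p ^ j).

Lemma order_sum_pgroup_sub_cyclic (gT hT : finGroupType) (P : {group gT}) (Q : {group hT}) p k :
  prime p -> #|P| = (p ^ k)%N -> #|Q| = (p ^ k)%N -> cyclic Q ->
  order_sum P - order_sum Q = (1 - Rpower (INR p) (s - r)) * Ldiv_excess P p k.
Proof.
move=> p_pr oP oQ cycQ; rewrite (order_sum_pgroup p_pr oP) (order_sum_pgroup p_pr oQ).
rewrite opprD addrACA subrr add0r -sumrB mulr_sumr; apply: eq_bigr => j _.
have -> : #|'Ldiv_(p ^ j)(Q)%g| = (p ^ j)%N.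
  apply/eqP; rewrite eqn_leq card_Ldiv_cyclic_le ?expn_gt0 ?prime_gt0 //=.
  by rewrite (card_Ldiv_pgroup_ge p_pr oQ) // ltnW.
rewrite -mulrBl; have [j0 | j_gt0] := posnP j.
  (* term_rs_pfactorS fails at j = 0, but there the weight vanishes. *)
  by rewrite j0 expn0 card_Ldiv1 !subrr !mul0r mulr0.
by rewrite term_rs_pfactorS //; ring.
Qed.

Lemma Ldiv_excess_term_ge0 (gT : finGroupType) (P : {group gT}) p k j :
  prime p -> #|P| = (p ^ k)%N -> (j <= k)%N ->
  0 <= (#|'Ldiv_(p ^ j)(P)%g|%:R - (p ^ j)%:R) * f (p ^ j).
Proof.
move=> p_pr oP le_jk; rewrite mulr_ge0 ?(ltW (term_rs_gt0 _)) //.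
by rewrite subr_ge0 ler_nat (card_Ldiv_pgroup_ge p_pr oP).
Qed.

Lemma Ldiv_excess_ge0 (gT : finGroupType) (P : {group gT}) p k :
  prime p -> #|P| = (p ^ k)%N -> 0 <= Ldiv_excess P p k.
Proof.
by move=> p_pr oP; apply: sumr_ge0 => j _; exact: Ldiv_excess_term_ge0 p_pr oP (ltnW (ltn_ord j)).
Qed.

Lemma Ldiv_excess_gt0 (gT : finGroupType) (P : {group gT}) p k :
  prime p -> #|P| = (p ^ k)%N -> ~~ cyclic P -> 0 < Ldiv_excess P p k.
Proof.
move=> p_pr oP ncycP; case: k oP => [|k] oP.
  by case/negP: ncycP; move/eqP: oP; rewrite expn0 -trivg_card1 => /eqP->; apply: cyclic1.
rewrite /Ldiv_excess big_ord_recr /= ltr_wpDl //.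
  by apply: sumr_ge0 => j _; exact: Ldiv_excess_term_ge0 p_pr oP (leqW (ltnW (ltn_ord j))).
rewrite mulr_gt0 ?term_rs_gt0 // subr_gt0 ltr_nat.
by rewrite (Ldiv_noncyclic_pgroup p_pr oP ncycP) oP ltn_exp2l ?prime_gt1.
Qed.

Lemma order_sum_pcore_sub_cyclic (gT hT : finGroupType) (G : {group gT}) (H : {group hT}) p :
  prime p -> nilpotent G -> cyclic H -> #|H| = #|G| ->
  order_sum 'O_p(G)%g - order_sum 'O_p(H)%g =
    (1 - Rpower (INR p) (s - r)) * Ldiv_excess 'O_p(G)%g p (logn p #|G|).
Proof.
move=> p_pr nilG cycH oH; have nilH := abelian_nil (cyclic_abelian cycH).
apply: order_sum_pgroup_sub_cyclic p_pr _ _ (cyclicS (pcore_sub _ _) cycH).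
  exact: card_nil_pcore.
by rewrite card_nil_pcore // oH.
Qed.

Lemma order_sum_sub_Zp (gT : finGroupType) (G : {group gT}) :
  nilpotent G -> ~~ cyclic G ->
  [/\ Rlt s r -> order_sum (Zp #|G|) < order_sum G,
      r = s -> order_sum G = order_sum (Zp #|G|) &
      Rlt r s -> order_sum G < order_sum (Zp #|G|)].
Proof.
move=> nilG ncycG; set N := #|G|; pose C := (Zp N)%G.
have oC : #|C| = N by rewrite card_Zp ?cardG_gt0.
have cycC : cyclic C := Zp_cyclic N.
rewrite (order_sum_nil_prod nilG) (order_sum_nil_prod (abelian_nil (cyclic_abelian cycC))) oC.
pose c p := 1 - Rpower (INR p) (s - r).
pose E (p : nat) := Ldiv_excess 'O_p(G)%g p (logn p N).
have prime_N p : p \in primes N -> prime p by rewrite mem_primes => /andP[].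
have sub_pcore (p : nat) : prime p ->
    order_sum 'O_p(G)%g - order_sum 'O_p(C)%g = c p * E p.
  by move=> p_pr; apply: order_sum_pcore_sub_cyclic.
have [q q_N ncyc_q] := nil_noncyclic_pcore nilG ncycG.
have E_gt0 : 0 < E q.
  by apply: Ldiv_excess_gt0 (prime_N q q_N) (card_nil_pcore _ nilG) ncyc_q.
have E_ge0 p : prime p -> 0 <= E p.
  by move=> p_pr; apply: Ldiv_excess_ge0 p_pr (card_nil_pcore _ nilG).
have INR_gt1 p : prime p -> Rlt 1 (INR p) by move/prime_gt1/ssrnat.ltP/lt_1_INR.
split=> [lt_sr | eq_rs | lt_rs].
- have c_gt0 p : prime p -> 0 < c p.
    by move=> p_pr; rewrite subr_gt0 Rpower_lt1 //; [exact: INR_gt1 | exact: Rlt_minus].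
  apply: ltr_prod_seq => [p p_N|]; last first.
    by exists q; rewrite // -subr_gt0 sub_pcore ?mulr_gt0 ?c_gt0 ?prime_N.
  have p_pr := prime_N p p_N.
  by rewrite order_sum_gt0 -subr_ge0 sub_pcore ?mulr_ge0 ?E_ge0 ?ltW ?c_gt0.
- apply: eq_big_seq => p p_N; apply/eqP; rewrite -subr_eq0 sub_pcore ?prime_N //.
  by rewrite /c eq_rs Rminus_diag Rpower_O ?subrr ?mul0r //; apply/INR_gt0/prime_gt0/prime_N.
- have c_lt0 p : prime p -> c p < 0.
    by move=> p_pr; rewrite subr_lt0 Rpower_gt1 //; [exact: INR_gt1 | exact/Rlt_0_minus].
  apply: ltr_prod_seq => [p p_N|]; last first.
    exists q; rewrite // -subr_gt0 -opprB sub_pcore ?prime_N // -mulNr.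
    by rewrite mulr_gt0 ?oppr_gt0 ?c_lt0 ?prime_N.
  have p_pr := prime_N p p_N.
  rewrite order_sum_gt0 -subr_ge0 -opprB sub_pcore // -mulNr.
  by rewrite mulr_ge0 ?E_ge0 ?oppr_ge0 ?ltW ?c_lt0.
Qed.

End OrderSum.

Theorem mainTheorem7 (gT : finGroupType) (G : {group gT}) (r s : R) :
  nilpotent G -> ~~ cyclic G ->
  (Rlt s r -> Rlt R0 (T_G G r s)) /\
  (r = s -> T_G G r s = R0) /\
  (Rlt r s -> Rlt (T_G G r s) R0).
Proof.
move=> nilG ncycG; have [lt_sr eq_rs lt_rs] := order_sum_sub_Zp r s nilG ncycG.
rewrite /T_G /R_C !R_G_order_sum RminusE.
split; [|split] => [/lt_sr lt_RG | /eq_rs-> | /lt_rs lt_RG].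
- by apply/RltP; rewrite subr_gt0.
- by rewrite subrr.
- by apply/RltP; rewrite subr_lt0.
Qed.
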